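(* Let $k\ge2$ and let $A\in\mathbf{GL}(n,\mathbb Z)$ satisfy $A\equiv I\bmod 2$ and $A^2\equiv I\bmod 2^{k+1}$. Then there exists $p\in\mathbf{GL}(n,\mathbb Z)$ such that $p^{-1}Ap$ is congruent modulo $2^k$ to a diagonal matrix with diagonal entries $\pm1$. Moreover, if $A=\begin{pmatrix}I_q&0\\ *&*\end{pmatrix}$ (block form with respect to $n=q+(n-q)$), then $p$ may be chosen of the form $\begin{pmatrix}I_q&0\\ *&*\end{pmatrix}$. *)

From mathcomp Require Import all_boot all_algebra.
Set Implicit Arguments. Unset Strict Implicit. Unset Printing Implicit Defensive.
Import GRing.Theory Num.Theory.
Local Open Scope ring_scope.

Definition mx_congr (m : int) (n1 n2 : nat) (A B : 'M[int]_(n1, n2)) : Prop :=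
  forall i j, (A i j = B i j %[mod m])%Z.

Definition diag_pm1 (n : nat) (D : 'M[int]_n) : Prop :=
  forall i j, D i j = (if i == j then D i i else 0) /\ (D i i = 1 \/ D i i = -1).

Definition lower_block_id (q r : nat) (A : 'M[int]_(q + r)) : Prop :=
  ulsubmx A = 1%:M /\ ursubmx A = 0.

From mathcomp Require Import all_boot all_algebra ring.
Import GRing.Theory Num.Theory.
Set Implicit Arguments. Unset Strict Implicit.
Local Open Scope ring_scope.

(* Write A = 1 - 2P. Since A^2 - 1 = 4 (P^2 - P), the hypotheses say that P is
   idempotent modulo N = 2^(k-1). Over the local ring Z/N an idempotent matrix is
   diagonalised by induction on its size: if its corner entry is a unit, P fixes a
   vector (1, w), and conjugating by two unipotent block matrices turns P into
   diag(1, d) with d idempotent; otherwise treat 1 - P instead. Unipotent and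
   block-diagonal conjugators lift to GL(n, Z), which yields a unimodular p with
   p^-1 P p = E + N K, E diagonal with entries 0 and 1, hence
   p^-1 A p = 1 - 2E modulo 2N = 2^k. In the block case P = [[0, 0], [X, Y]], and
   the conjugator [[1, 0], [-X, p_Y]] built from one for Y keeps the required shape. *)

Section LiftedIdempotents.
Variables (S R : comUnitRingType) (f : {rmorphism S -> R}) (lift : R -> S).
Hypothesis liftK : cancel lift f.
Hypothesis R_local : forall a : R, a \is a GRing.unit \/ (1 - a) \is a GRing.unit.

Local Notation fm := (map_mx f).

Lemma map_mx_liftK m n (X : 'M[R]_(m, n)) : fm (map_mx lift X) = X.
Proof. by apply/matrixP => i j; rewrite !mxE liftK. Qed.

Definition lifted_similar n (P Q : 'M[R]_n) :=
  exists2 p : 'M[S]_n, p \in unitmx & P *m fm p = fm p *m Q.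

Definition zero_one_row n (e : 'rV[S]_n) := forall j, e 0 j = 0 \/ e 0 j = 1.

Lemma lifted_similar_refl n (P : 'M[R]_n) : lifted_similar P P.
Proof. by exists 1; rewrite ?unitmx1 // map_mx1 mulmx1 mul1mx. Qed.

Lemma lifted_similar_trans n (P Q T : 'M[R]_n) :
  lifted_similar P Q -> lifted_similar Q T -> lifted_similar P T.
Proof.
move=> [p pU PQ] [q qU QT]; exists (p *m q); first by rewrite unitmx_mul pU.
by rewrite map_mxM mulmxA PQ -!mulmxA QT.
Qed.

Lemma lifted_similar_compl n (P Q : 'M[R]_n) :
  lifted_similar P Q -> lifted_similar (1 - P) (1 - Q).
Proof. by move=> [p pU PQ]; exists p; rewrite // mulmxBl mulmxBr mul1mx mulmx1 PQ. Qed.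

Lemma lifted_similar_idem n (P Q : 'M[R]_n) :
  lifted_similar P Q -> P *m P = P -> Q *m Q = Q.
Proof.
move=> [p pU PQ] PP.
have fpU : fm p \in unitmx by rewrite unitmxE det_map_mx rmorph_unit // -unitmxE.
by apply: (can_inj (mulKmx fpU)); rewrite mulmxA -PQ -mulmxA -PQ mulmxA PP.
Qed.

Lemma lifted_similar_block_diag m n (P Q : 'M[R]_m) (P' Q' : 'M[R]_n) :
  lifted_similar P Q -> lifted_similar P' Q' ->
  lifted_similar (block_mx P 0 0 P') (block_mx Q 0 0 Q').
Proof.
move=> [p pU PQ] [p' pU' PQ']; exists (block_mx p 0 0 p').
  by rewrite unitmxE det_ublock unitrM -!unitmxE pU pU'.
by rewrite map_block_mx !map_mx0 !mulmx_block !mulmx0 !mul0mx !addr0 !add0r PQ PQ'.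
Qed.

Lemma lifted_similar_lower_unipotent m n (X : 'M[R]_(n, m)) (P Q : 'M[R]_(m + n)) :
  P *m block_mx 1 0 X 1 = block_mx 1 0 X 1 *m Q -> lifted_similar P Q.
Proof.
move=> PQ; exists (block_mx 1 0 (map_mx lift X) 1).
  by rewrite unitmxE det_lblock !det1 mulr1 unitr1.
by rewrite map_block_mx !map_mx1 map_mx0 map_mx_liftK.
Qed.

Lemma lifted_similar_upper_unipotent m n (X : 'M[R]_(m, n)) (P Q : 'M[R]_(m + n)) :
  P *m block_mx 1 X 0 1 = block_mx 1 X 0 1 *m Q -> lifted_similar P Q.
Proof.
move=> PQ; exists (block_mx 1 (map_mx lift X) 0 1).
  by rewrite unitmxE det_ublock !det1 mulr1 unitr1.
by rewrite map_block_mx !map_mx1 map_mx0 map_mx_liftK.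
Qed.

Lemma idempotent_unit_corner_fixed_col n (P : 'M[R]_(1 + n)) :
  P *m P = P -> P 0 0 \is a GRing.unit ->
  exists w : 'cV_n, P *m col_mx 1 w = col_mx 1 w.
Proof.
move=> PP uP; pose v := (P 0 0)^-1 *: col 0 P.
have Pv : P *m v = v by rewrite /v -scalemxAr colE mulmxA PP.
have v_top : usubmx v = 1.
  by apply/matrixP => i j; rewrite !ord1 !mxE lshift0 mulVr.
by exists (dsubmx v); rewrite -v_top vsubmxK.
Qed.

Lemma fixed_col_similar_upper_block n (P : 'M[R]_(1 + n)) (w : 'cV_n) :
  P *m col_mx 1 w = col_mx 1 w ->
  exists b d, lifted_similar P (block_mx 1 b 0 d).
Proof.
move=> Pw; pose L (x : 'cV[R]_n) : 'M_(1 + n) := block_mx 1 0 x 1.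
have LN x : L x *m L (- x) = 1.
  rewrite mulmx_block !mulmx1 !mul1mx !mulmx0 !mul0mx !addr0 add0r subrr.
  exact: (esym (scalar_mx_block 1 n 1)).
pose Q := L (- w) *m P *m L w.
have Q_e0 : Q *m col_mx 1 0 = col_mx 1 0.
  rewrite -!mulmxA !(mul_block_col, mulmx1, mul1mx, mulmx0, mul0mx, addr0, add0r) Pw.
  by rewrite !(mul_block_col, mulmx1, mul1mx, mul0mx, addr0, add0r) addNr.
exists (ursubmx Q), (drsubmx Q); apply: (@lifted_similar_lower_unipotent _ _ w).
suff -> : block_mx 1 (ursubmx Q) 0 (drsubmx Q) = Q by rewrite /Q !mulmxA LN mul1mx.
move: Q_e0; rewrite -{1}(submxK Q) !(mul_block_col, mulmx1, mulmx0, addr0).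
by case/eq_col_mx => <- <-; rewrite submxK.
Qed.

Lemma upper_block_idempotent n (b : 'rV[R]_n) (d : 'M[R]_n) :
  block_mx 1 b 0 d *m block_mx 1 b 0 d = block_mx 1 b 0 d ->
  d *m d = d /\ lifted_similar (block_mx 1 b 0 d) (block_mx 1 0 0 d).
Proof.
rewrite mulmx_block !mulmx1 !mul1mx !mulmx0 !mul0mx !addr0 !add0r.
case/eq_block_mx => _ bdb _ dd; split=> //.
have bd0 : b *m d = 0 by rewrite -[b *m d](addKr b) bdb addNr.
apply: (@lifted_similar_upper_unipotent _ _ (- b)).
by rewrite !mulmx_block !mulmx1 !mul1mx !mulmx0 !mul0mx !addr0 !add0r mulNmx bd0 oppr0 addNr.
Qed.

Lemma idempotent_unit_corner_similar n (P : 'M[R]_(1 + n)) :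
  P *m P = P -> P 0 0 \is a GRing.unit ->
  exists2 d : 'M[R]_n, d *m d = d & lifted_similar P (block_mx 1 0 0 d).
Proof.
move=> PP uP; have [w Pw] := idempotent_unit_corner_fixed_col PP uP.
have [b [d simPQ]] := fixed_col_similar_upper_block Pw.
have [dd simQD] := upper_block_idempotent (lifted_similar_idem simPQ PP).
by exists d => //; apply: lifted_similar_trans simQD.
Qed.

Lemma idempotent_lifted_similar_diag n (P : 'M[R]_n) : P *m P = P ->
  exists2 e : 'rV[S]_n, zero_one_row e & lifted_similar P (fm (diag_mx e)).
Proof.
elim: n P => [|n IHn] P PP.
  exists 0; first by move=> j; rewrite mxE; left.
  by rewrite [P]flatmx0 [fm _]flatmx0; apply: lifted_similar_refl.
move: P PP; rewrite -[n.+1]/(1 + n)%N => P PP.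
wlog uP : P PP / P 0 0 \is a GRing.unit.
  move=> hyp; have [|uP] := R_local (P 0 0); first exact: hyp.
  have [||e e01 sim] := hyp (1 - P).
  - by rewrite mulmxBl !mulmxBr !mul1mx mulmx1 PP subrr subr0.
  - by rewrite !mxE eqxx.
  exists (const_mx 1 - e).
    by move=> j; rewrite !mxE; case: (e01 j) => ->; rewrite ?subr0 ?subrr; [right|left].
  move: (lifted_similar_compl sim); rewrite subKr.
  by rewrite raddfB /= diag_const_mx map_mxB map_mx1.
have [d dd simPd] := idempotent_unit_corner_similar PP uP.
have [e e01 simd] := IHn d dd.
exists (row_mx 1 e).
  by move=> j; rewrite mxE; case: splitP => k _; [right; rewrite (ord1 k) mxE | exact: e01].
apply: lifted_similar_trans simPd _.
rewrite diag_mx_row map_block_mx !map_mx0.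
have -> : fm (diag_mx 1) = 1 :> 'M_1 by apply/matrixP => i j; rewrite !ord1 !mxE rmorph1.
exact: lifted_similar_block_diag (lifted_similar_refl 1) simd.
Qed.

Lemma lower_block_idempotent_similar q r (X : 'M[R]_(r, q)) (Y : 'M[R]_r) :
  Y *m X = X -> Y *m Y = Y ->
  exists (p : 'M[S]_(q + r)) (e : 'rV[S]_(q + r)),
    [/\ p \in unitmx, ulsubmx p = 1, ursubmx p = 0, zero_one_row e &
        block_mx 0 0 X Y *m fm p = fm p *m fm (diag_mx e)].
Proof.
move=> YX YY; have [e e01 [p pU Yp]] := idempotent_lifted_similar_diag YY.
exists (block_mx 1 0 (- map_mx lift X) p), (row_mx 0 e); split.
- by rewrite unitmxE det_lblock det1 mul1r -unitmxE.
- exact: block_mxKul.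
- exact: block_mxKur.
- by move=> j; rewrite mxE; case: splitP => k _; [left; rewrite mxE | exact: e01].
rewrite diag_mx_row linear0 !map_block_mx !map_mx0 !map_mx1 map_mxN map_mx_liftK.
by rewrite !mulmx_block !(mulmx0, mul0mx, mulmx1, mul1mx, addr0, add0r) Yp mulmxN YX subrr.
Qed.

End LiftedIdempotents.

Lemma Zp_prime_power_local (p j : nat) (a : 'Z_(p ^ j.+1)) : prime p ->
  a \is a GRing.unit \/ (1 - a) \is a GRing.unit.
Proof.
move=> p_pr; have p_gt1 := prime_gt1 p_pr.
have N_gt1 : (1 < p ^ j.+1)%N := leq_ltn_trans (ltn0Sn j) (ltn_expl _ p_gt1).
have unitE (x : 'Z_(p ^ j.+1)) : (x \is a GRing.unit) = ~~ (p %| x)%N.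
  by rewrite -{1}(natr_Zp x) unitZpE // coprime_pexpl // prime_coprime.
have : a + (1 - a) = 1 by rewrite addrC subrK.
move: (1 - a) => b ab; rewrite !unitE; apply/orP; rewrite -negb_and.
apply/negP => /andP [pa pb].
have : ((a + b)%N%:R = 1%:R :> 'Z_(p ^ j.+1)) by rewrite natrD !natr_Zp.
move/(congr1 (fun x : 'Z_(p ^ j.+1) => (x : nat) %% p)%N).
rewrite !val_Zp_nat // !modn_dvdm ?dvdn_exp // (modn_small p_gt1).
by move: (dvdn_add pa pb); rewrite /dvdn => /eqP ->.
Qed.

Lemma Zp_intr_eq (N : nat) (x y : int) : (1 < N)%N ->
  ((x%:~R : 'Z_N) == y%:~R) = (x == y %[mod N])%Z.
Proof.
move=> N_gt1; rewrite eqz_mod_dvd -subr_eq0 -intrB dvdzE /=.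
case: (x - y) => n; rewrite ?NegzE ?mulrNz ?oppr_eq0 ?abszN -?pmulrn /=.
all: by rewrite -(inj_eq val_inj) /= val_Zp_nat.
Qed.

Lemma mx_congr_Zp (N : nat) a b (X Y : 'M[int]_(a, b)) : (1 < N)%N ->
  mx_congr N X Y <-> map_mx (intr : int -> 'Z_N) X = map_mx intr Y.
Proof.
move=> N_gt1; split=> [XY | /matrixP XY i j].
  by apply/matrixP => i j; rewrite !mxE; apply/eqP; rewrite Zp_intr_eq //; apply/eqP.
by apply/eqP; rewrite -Zp_intr_eq //; have := XY i j; rewrite !mxE => ->.
Qed.

Lemma mx_congrP (m : int) a b (X Y : 'M[int]_(a, b)) :
  mx_congr m X Y <-> exists K, X = Y + m *: K.
Proof.
split=> [XY | [K ->] i j]; last by rewrite !mxE addrC mulrC modzMDl.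
exists (\matrix_(i, j) ((X i j - Y i j) %/ m)%Z); apply/matrixP => i j.
rewrite !mxE mulrC divzK; first by rewrite addrC subrK.
by rewrite -eqz_mod_dvd; apply/eqP.
Qed.

Lemma mx_congr_sub (m : int) a b (X Y : 'M[int]_(a, b)) :
  mx_congr m X Y <-> forall i j, (m %| (X - Y) i j)%Z.
Proof.
split=> XY i j; first by rewrite !mxE -eqz_mod_dvd; apply/eqP.
by apply/eqP; rewrite eqz_mod_dvd; have := XY i j; rewrite !mxE.
Qed.

Lemma sqr_one_sub_double (R : comNzRingType) n (P : 'M[R]_n) :
  (1%:M - 2 *: P) *m (1%:M - 2 *: P) - 1%:M = 4 *: (P *m P - P).
Proof.
rewrite mulmxBl !mulmxBr !mul1mx !mulmx1 -!scalemxAl -!scalemxAr.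
by move: (P *m P) => Q; apply/matrixP => i j; rewrite !mxE; ring.
Qed.

Lemma one_sub_double_of_congr n (N : int) (A : 'M[int]_n) :
  mx_congr 2 A 1%:M -> mx_congr (4 * N) (A *m A) 1%:M ->
  exists2 P, A = 1%:M - 2 *: P & mx_congr N (P *m P) P.
Proof.
move=> /mx_congrP [K AE] /mx_congr_sub AA.
have {}AE : A = 1%:M - 2 *: (- K) by rewrite AE scalerN opprK.
move: (- K) AE AA => P -> AA; exists P => //.
apply/mx_congr_sub => i j; rewrite -(@dvdz_mul2l 4) //.
by have := AA i j; rewrite sqr_one_sub_double mxE.
Qed.

Lemma lower_block_id_one_sub_double q r (P : 'M[int]_(q + r)) :
  lower_block_id (1%:M - 2 *: P) -> ulsubmx P = 0 /\ ursubmx P = 0.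
Proof.
have dbl_eq0 (x y : int) : x - 2 * y = x -> y = 0.
  by move/eqP; rewrite -subr_eq0 addrAC subrr add0r oppr_eq0 mulf_eq0 => /eqP.
move=> [/matrixP ul /matrixP ur]; split; apply/matrixP => i j; rewrite !mxE.
  by apply: (dbl_eq0 (i == j)%:R); have := ul i j; rewrite !mxE eq_lshift.
by apply: (dbl_eq0 0); have := ur i j; rewrite !mxE eq_lrshift.
Qed.

Lemma conj_one_sub_double n (N : int) (P p E : 'M[int]_n) : p \in unitmx ->
  mx_congr N (P *m p) (p *m E) ->
  mx_congr (2 * N) (invmx p *m (1%:M - 2 *: P) *m p) (1%:M - 2 *: E).
Proof.
move=> pU /mx_congrP [K PpE]; apply/mx_congrP; exists (- (invmx p *m K)).
have conjP : invmx p *m P *m p = E + N *: (invmx p *m K).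
  by rewrite -mulmxA PpE mulmxDr mulmxA mulVmx // mul1mx scalemxAr.
rewrite mulmxBr mulmxBl mulmx1 mulVmx // -scalemxAr -scalemxAl conjP.
by rewrite scalerDr scalerA scalerN opprD addrA.
Qed.

Lemma diag_pm1_one_sub_double n (e : 'rV[int]_n) :
  zero_one_row e -> diag_pm1 (1%:M - 2 *: diag_mx e).
Proof.
move=> e01 i j; rewrite !mxE eqxx /=; split; last by case: (e01 i) => ->; [left|right].
by case: (i == j).
Qed.

Lemma lower_block_involution_conj_diag m q r (A : 'M[int]_(q + r)) :
  mx_congr 2 A 1%:M -> mx_congr (2 ^+ m.+3) (A *m A) 1%:M -> lower_block_id A ->
  exists (p D : 'M[int]_(q + r)), [/\ p \in unitmx, lower_block_id p, diag_pm1 D &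
    mx_congr (2 ^+ m.+2) (invmx p *m A *m p) D].
Proof.
set N := (2 ^ m.+1)%N.
have N_gt1 : (1 < N)%N := leq_ltn_trans (ltn0Sn m) (ltn_expl _ (isT : 1 < 2)%N).
have NE : 2 ^+ m.+1 = N%:Z by rewrite /N -natz natrX.
have liftK : cancel (fun x : 'Z_N => (x : nat)%:Z) intr := @natr_Zp _.
have Zp_local (a : 'Z_N) := Zp_prime_power_local a (isT : prime 2).
move=> A_odd; rewrite 2!exprS mulrA NE => /(one_sub_double_of_congr A_odd) [P AE PP].
rewrite AE => /lower_block_id_one_sub_double [Pul Pur].
have PE : P = block_mx 0 0 (dlsubmx P) (drsubmx P) by rewrite -Pul -Pur submxK.
move: (dlsubmx P) (drsubmx P) PE => X Y PE.
have [YX YY] : map_mx (intr : int -> 'Z_N) Y *m map_mx intr X = map_mx intr X /\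
               map_mx (intr : int -> 'Z_N) Y *m map_mx intr Y = map_mx intr Y.
  move/(mx_congr_Zp _ _ N_gt1): PP; rewrite map_mxM PE map_block_mx !map_mx0.
  by rewrite mulmx_block !(mulmx0, mul0mx, addr0, add0r) => /eq_block_mx [].
have [p [e [pU pul pur e01 Pp]]] := lower_block_idempotent_similar liftK Zp_local YX YY.
exists p, (1%:M - 2 *: diag_mx e); split => //; first exact: diag_pm1_one_sub_double.
apply: conj_one_sub_double => //; apply/(mx_congr_Zp _ _ N_gt1).
by rewrite !map_mxM PE map_block_mx !map_mx0.
Qed.

Theorem lemma10p2 (k : nat) (hk : (2 <= k)%N) :
  (forall (n : nat) (A : 'M[int]_n),
     A \in unitmx ->
     mx_congr 2 A 1%:M ->
     mx_congr (2 ^+ k.+1) (A *m A) 1%:M ->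
     exists (p D : 'M[int]_n),
       [/\ p \in unitmx, diag_pm1 D & mx_congr (2 ^+ k) (invmx p *m A *m p) D])
  /\
  (forall (q r : nat) (A : 'M[int]_(q + r)),
     A \in unitmx ->
     mx_congr 2 A 1%:M ->
     mx_congr (2 ^+ k.+1) (A *m A) 1%:M ->
     lower_block_id A ->
     exists (p D : 'M[int]_(q + r)),
       [/\ p \in unitmx, lower_block_id p, diag_pm1 D &
           mx_congr (2 ^+ k) (invmx p *m A *m p) D]).
Proof.
case: k hk => [|[|m]] // _; split=> [n A _ A_odd A_sq | q r A _].
  have [|p [D [pU _ DD conj]]] := lower_block_involution_conj_diag (q := 0) A_odd A_sq.
    by split; apply/matrixP => -[].
  by exists p, D.
exact: lower_block_involution_conj_diag.
Qed.
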